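(* For every integer $m\ge 0$ and every $n\ge 2$, $$v_n(x,m,s,q)=x\,v_{n-1}(x,m,s,q)-s\,\lambda_{n-2}(m,q)\,\frac{q^{n-1}}{(1+q^{n+m-2})(1+q^{n+m-1})}\,v_{n-2}(x,m,s,q),$$ where $\lambda_0(m,q)=\frac{1+q^m}{[m+1]}$ and $\lambda_n(m,q)=\frac{[n+1]\,[n+2m]}{[n+m]\,[n+m+1]}$ for $n\ge1$.
   Context: $q$ is an indeterminate; $[n]=\frac{1-q^n}{1-q}$, $[n]!=[1]\cdots[n]$, $[0]!=1$, $(a;q)_n=(1-a)(1-qa)\cdots(1-q^{n-1}a)$, $(a;q)_0=1$. For an integer $m\ge 0$ and indeterminates $x,s$, $$v_n(x,m,s,q)=\sum_{k=0}^{\lfloor n/2\rfloor}(-s)^kq^{k^2}\frac{[n]!}{[k]!\,[n-2k]!}\,\frac{[m+n-k-1]!}{[m+n-1]!}\,\frac{1}{(-q;q)_k\,(-q^{n+m-k};q)_k}\,x^{n-2k}\quad(n\ge1),\qquad v_0=1.$$ *)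

From HB Require Import structures.
From mathcomp Require Import all_boot all_order all_algebra.
Set Implicit Arguments. Unset Strict Implicit. Unset Printing Implicit Defensive.
Import Order.TTheory GRing.Theory Num.Theory.
Local Open Scope ring_scope.

Section QDefs.
Variable F : fieldType.

Definition qint (q : F) (n : nat) : F := \sum_(i < n) q ^+ i.

Definition qfact (q : F) (n : nat) : F := \prod_(i < n) qint q i.+1.

Definition qpoch (a q : F) (n : nat) : F := \prod_(i < n) (1 - q ^+ i * a).

Definition vpoly (x : F) (m : nat) (s q : F) (n : nat) : F :=
  if n is 0 then 1 else
  \sum_(k < (n./2).+1)
    (- s) ^+ k * q ^+ (k * k)
    * (qfact q n / (qfact q k * qfact q (n - 2 * k)))
    * (qfact q (m + n - k - 1) / qfact q (m + n - 1))
    / (qpoch (- q) q k * qpoch (- q ^+ (n + m - k)) q k)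
    * x ^+ (n - 2 * k).

Definition qlambda (n m : nat) (q : F) : F :=
  if n is 0 then (1 + q ^+ m) / qint q (m + 1)
  else qint q (n + 1) * qint q (n + 2 * m) / (qint q (n + m) * qint q (n + m + 1)).

End QDefs.

(* Compare coefficients: writing c(n,k) for the coefficient of x^(n-2k) in v_n,
   both c(n+2,k+1) and c(n+1,k+1) are explicit multiples of c(n,k), so the
   recurrence reduces to an identity between q-integers.  Using
   [2j] = [j](1+q^j), it becomes the q-analogue [a+b][a+c] = [a][a+b+c] + q^a[b][c]
   of (a+b)(a+c) = a(a+b+c) + bc, with a = n-2k, b = 2k+2, c = 2k+a+2m. *)

From HB Require Import structures.
From mathcomp Require Import all_boot all_order all_algebra.
From mathcomp Require Import zify.
From mathcomp.algebra_tactics Require Import ring.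
Import GRing.Theory.
Set Implicit Arguments. Unset Strict Implicit.
Local Open Scope ring_scope.

Section QCalculus.
Variables (F : fieldType) (q : F).

Lemma qint0 : qint q 0 = 0.
Proof. by rewrite /qint big_ord0. Qed.

Lemma qintS n : qint q n.+1 = qint q n + q ^+ n.
Proof. by rewrite /qint big_ord_recr. Qed.

Lemma qintD a b : qint q (a + b) = qint q a + q ^+ a * qint q b.
Proof.
rewrite /qint big_split_ord /= mulr_sumr.
by congr (_ + _); apply: eq_bigr => i _; rewrite exprD.
Qed.

Lemma qint_double n : qint q (n + n) = qint q n * (1 + q ^+ n).
Proof. by rewrite qintD; ring. Qed.

Lemma qintD_mulD a b c :
  qint q (a + b) * qint q (a + c) =
  qint q a * qint q (a + b + c) + q ^+ a * qint q b * qint q c.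
Proof.
have -> : (a + b + c = b + (a + c))%N by rewrite addnCA addnA.
by rewrite (addnC a b) !qintD; ring.
Qed.

Lemma qfact0 : qfact q 0 = 1.
Proof. by rewrite /qfact big_ord0. Qed.

Lemma qfactS n : qfact q n.+1 = qfact q n * qint q n.+1.
Proof. by rewrite /qfact big_ord_recr. Qed.

Lemma qpoch0 a : qpoch a q 0 = 1.
Proof. by rewrite /qpoch big_ord0. Qed.

Lemma qpochS a n : qpoch a q n.+1 = qpoch a q n * (1 - q ^+ n * a).
Proof. by rewrite /qpoch big_ord_recr. Qed.

Lemma qpochSl a n : qpoch a q n.+1 = (1 - a) * qpoch (q * a) q n.
Proof.
rewrite /qpoch big_ord_recl expr0 mul1r; congr (_ * _).
by apply: eq_bigr => i _; rewrite exprS mulrCA mulrA.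
Qed.

Lemma qpoch_negS t n : qpoch (- q ^+ t) q n.+1 = qpoch (- q ^+ t) q n * (1 + q ^+ (t + n)).
Proof. by rewrite qpochS mulrN opprK -exprD addnC. Qed.

Lemma qpoch_negqS n : qpoch (- q) q n.+1 = qpoch (- q) q n * (1 + q ^+ n.+1).
Proof. by rewrite qpochS mulrN opprK -exprSr. Qed.

Lemma qpoch_neg_shift t n :
  qpoch (- q ^+ t.+1) q n.+1 * (1 + q ^+ t) =
  qpoch (- q ^+ t) q n * (1 + q ^+ (t + n)) * (1 + q ^+ (t + n).+1).
Proof.
by rewrite -addnS -!qpoch_negS [RHS]qpochSl mulrN -exprS opprK mulrC.
Qed.

End QCalculus.

Section Coefficients.
Variables (F : fieldType) (m : nat) (s q : F).
Hypothesis hq_int : forall k : nat, (0 < k)%N -> qint q k != 0.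
Hypothesis hq_pow : forall j : nat, 1 + q ^+ j != 0.

Definition vcoef (n k : nat) : F :=
  if (2 * k <= n)%N then
    (- s) ^+ k * q ^+ (k * k)
    * (qfact q n / (qfact q k * qfact q (n - 2 * k)))
    * (qfact q (m + n - k - 1) / qfact q (m + n - 1))
    / (qpoch (- q) q k * qpoch (- q ^+ (n + m - k)) q k)
  else 0.

Definition vrec_coef (n : nat) : F :=
  s * qlambda n m q * q ^+ n.+1 / ((1 + q ^+ (m + n)) * (1 + q ^+ (m + n).+1)).

Lemma qintS_neq0 n : qint q n.+1 != 0.
Proof. exact: hq_int. Qed.

Lemma qfact_neq0 n : qfact q n != 0.
Proof. by apply/prodf_neq0 => i _; apply: hq_int. Qed.

Lemma qpoch_neg_neq0 t n : qpoch (- q ^+ t) q n != 0.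
Proof. by elim: n => [|n IH]; rewrite ?qpoch0 ?oner_eq0 // qpoch_negS mulf_neq0. Qed.

Lemma qpoch_negq_neq0 n : qpoch (- q) q n != 0.
Proof. exact: (qpoch_neg_neq0 1). Qed.

Lemma vcoef_n0 n : vcoef n 0 = 1.
Proof.
rewrite /vcoef muln0 !subn0 !qpoch0 qfact0 !expr0 !mul1r !invr1 !mulr1 /=.
by rewrite !divff ?mulr1 ?qfact_neq0.
Qed.

Lemma vcoef_gt n k : (n < 2 * k)%N -> vcoef n k = 0.
Proof. by rewrite /vcoef ltnNge => /negbTE ->. Qed.

Lemma vpoly_vcoefE (x : F) n N : (n./2 < N)%N ->
  vpoly x m s q n = \sum_(k < N) vcoef n k * x ^+ (n - 2 * k).
Proof.
move=> hN.
have -> : vpoly x m s q n = \sum_(k < n./2.+1) vcoef n k * x ^+ (n - 2 * k).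
  case: n {hN} => [|n]; first by rewrite big_ord1 vcoef_n0 mul1r.
  rewrite /vpoly; apply: eq_bigr => k _.
  by rewrite /vcoef ifT // mul2n -geq_half_double -ltnS.
rewrite (big_ord_widen N (fun k => vcoef n k * x ^+ (n - 2 * k)) hN) big_mkcond /=.
apply: eq_bigr => k _; rewrite ltnS geq_half_double -mul2n.
by case: leqP => // hk; rewrite vcoef_gt ?mul0r.
Qed.

Lemma vcoef_shift2 n k : (0 < n)%N -> (2 * k <= n)%N ->
  vcoef n.+2 k.+1 = vcoef n k *
    (- s * q ^+ (2 * k).+1 * qint q n.+1
       * (qint q n.+2 * qint q (m + n - k) * (1 + q ^+ (m + n - k)))
     / (qint q k.+1 * qint q (m + n) * qint q (m + n).+1
       * (1 + q ^+ k.+1) * (1 + q ^+ (m + n)) * (1 + q ^+ (m + n).+1))).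
Proof.
move=> n_gt0 hk; rewrite /vcoef !ifT; try lia.
have -> : (n.+2 - 2 * k.+1 = n - 2 * k)%N by lia.
have -> : (n.+2 + m - k.+1 = (m + n - k).+1)%N by lia.
have -> : (n + m - k = m + n - k)%N by rewrite addnC.
have -> : (m + n.+2 - k.+1 - 1 = m + n - k)%N by lia.
have -> : (m + n.+2 - 1 = (m + n).+1)%N by lia.
have -> : (k.+1 * k.+1 = k * k + (2 * k).+1)%N by lia.
rewrite -(mulfK (hq_pow (m + n - k)) (qpoch (- q ^+ (m + n - k).+1) q k.+1)).
rewrite qpoch_neg_shift subnK; last by lia.
rewrite qpoch_negqS exprS exprD !qfactS.
have [j ->] : exists j, (m + n - k)%N = j.+1 by exists (m + n - k).-1; lia.
have [i ->] : exists i, (m + n)%N = i.+1 by exists (m + n).-1; lia.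
rewrite !subn1 /= !qfactS.
by field; rewrite ?qfact_neq0 ?qintS_neq0 ?qpoch_negq_neq0 ?qpoch_neg_neq0 ?hq_pow.
Qed.

Lemma vcoef_shift1 n k : (2 * k < n)%N ->
  vcoef n.+1 k.+1 = vcoef n k *
    (- s * q ^+ (2 * k).+1 * qint q n.+1 * qint q (n - 2 * k)
     / (qint q k.+1 * qint q (m + n) * (1 + q ^+ k.+1) * (1 + q ^+ (m + n)))).
Proof.
move=> hk; rewrite /vcoef !ifT; try lia.
have -> : (n.+1 + m - k.+1 = m + n - k)%N by lia.
have -> : (n + m - k = m + n - k)%N by rewrite addnC.
have -> : (m + n.+1 - k.+1 - 1 = m + n - k - 1)%N by lia.
have -> : (m + n.+1 - 1 = m + n)%N by lia.
have -> : (k.+1 * k.+1 = k * k + (2 * k).+1)%N by lia.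
rewrite qpoch_negS subnK; last by lia.
rewrite qpoch_negqS exprS exprD !qfactS.
have [a ea] : exists a, (n - 2 * k)%N = a.+1 by exists (n - 2 * k).-1; lia.
have -> : (n.+1 - 2 * k.+1 = a)%N by lia.
have [i ->] : exists i, (m + n)%N = i.+1 by exists (m + n).-1; lia.
rewrite ea !subn1 /= !qfactS.
by field; rewrite ?qfact_neq0 ?qintS_neq0 ?qpoch_negq_neq0 ?qpoch_neg_neq0 ?hq_pow.
Qed.

Lemma qlambdaE n : (0 < n)%N ->
  qlambda n m q = qint q n.+1 * qint q (n + 2 * m) / (qint q (m + n) * qint q (m + n).+1).
Proof. by case: n => // n _; rewrite /qlambda !addn1 (addnC m). Qed.

Lemma vcoef_ratio_rec n k : (0 < n)%N -> (2 * k <= n)%N ->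
  - s * q ^+ (2 * k).+1 * qint q n.+1
    * (qint q n.+2 * qint q (m + n - k) * (1 + q ^+ (m + n - k)))
  / (qint q k.+1 * qint q (m + n) * qint q (m + n).+1
    * (1 + q ^+ k.+1) * (1 + q ^+ (m + n)) * (1 + q ^+ (m + n).+1))
  = - s * q ^+ (2 * k).+1 * qint q n.+1 * qint q (n - 2 * k)
    / (qint q k.+1 * qint q (m + n) * (1 + q ^+ k.+1) * (1 + q ^+ (m + n)))
    - vrec_coef n.
Proof.
move=> n_gt0 hk; rewrite /vrec_coef qlambdaE //.
have [a en] : exists a, (n = 2 * k + a)%N by exists (n - 2 * k)%N; lia.
subst n.
have -> : (m + (2 * k + a) - k = m + k + a)%N by lia.
have -> : (2 * k + a - 2 * k = a)%N by lia.
have key : qint q (2 * k + a).+2 * qint q (m + k + a) * (1 + q ^+ (m + k + a)) =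
    qint q a * (qint q (m + (2 * k + a)).+1 * (1 + q ^+ (m + (2 * k + a)).+1))
    + q ^+ a * (qint q k.+1 * (1 + q ^+ k.+1)) * qint q (2 * k + a + 2 * m).
  rewrite -mulrA -!qint_double.
  have := qintD_mulD q a (k.+1 + k.+1) (2 * k + a + 2 * m).
  have -> : (a + (k.+1 + k.+1) + (2 * k + a + 2 * m) =
             (m + (2 * k + a)).+1 + (m + (2 * k + a)).+1)%N by lia.
  have -> : (a + (k.+1 + k.+1) = (2 * k + a).+2)%N by lia.
  by have -> : (a + (2 * k + a + 2 * m) = m + k + a + (m + k + a))%N by lia.
rewrite key (_ : (2 * k + a).+1 = (2 * k).+1 + a)%N ?(exprD q (2 * k).+1 a); last by lia.
have [i ->] : exists i, (m + (2 * k + a))%N = i.+1 by exists (m + (2 * k + a)).-1; lia.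
by field; rewrite ?qintS_neq0 ?hq_pow.
Qed.

Lemma vcoef_two_one : vcoef 2 1 = - vrec_coef 0.
Proof.
rewrite /vcoef /vrec_coef /qlambda /= muln1 subnn addn0 addn1.
have -> : (m + 2 - 1 - 1 = m)%N by lia.
have -> : (m + 2 - 1 = m.+1)%N by lia.
have -> : (2 + m - 1 = m.+1)%N by lia.
rewrite qpoch_negqS qpoch_negS !qpoch0 !qfactS qfact0 (qintS q 1) (qintS q 0) qint0.
rewrite addn0 expr0.
have hq1 : 1 + q != 0 := hq_pow 1.
by field; rewrite ?qfact_neq0 ?qintS_neq0 ?hq_pow ?hq1 ?oner_eq0.
Qed.

Lemma vcoef_rec n k : vcoef n.+2 k.+1 = vcoef n.+1 k.+1 - vrec_coef n * vcoef n k.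
Proof.
have [hk|hk] := ltnP n (2 * k).
  by rewrite !vcoef_gt ?mulr0 ?subrr //; lia.
(* [lambda_0] has its own formula, and [vcoef_shift2] fails for [n = m = 0]. *)
case: (posnP n) => [n0|n_gt0].
  rewrite n0 in hk *; case: k hk => [|k] hk; last by lia.
  by rewrite vcoef_two_one vcoef_n0 vcoef_gt // sub0r mulr1.
rewrite vcoef_shift2 // vcoef_ratio_rec //.
have [hk'|hk'|<-] := ltngtP (2 * k) n; first by rewrite vcoef_shift1 //; ring.
  by rewrite ltnNge hk in hk'.
rewrite subnn qint0 mulr0 mul0r (vcoef_gt (n := (2 * k).+1)); last by lia.
by ring.
Qed.

Lemma vpoly_rec (x : F) n :
  vpoly x m s q n.+2 = x * vpoly x m s q n.+1 - vrec_coef n * vpoly x m s q n.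
Proof.
rewrite (vpoly_vcoefE x (n := n) (N := n.+1)) ?(vpoly_vcoefE x (N := n.+2)); try lia.
rewrite [LHS]big_ord_recl [X in x * X]big_ord_recl !vcoef_n0.
rewrite mulrDr !mulr_sumr -addrA -sumrB.
congr (_ + _); first by rewrite !mul1r muln0 !subn0 exprS.
apply: eq_bigr => i _; rewrite lift0 vcoef_rec mulrBl.
have -> : (n.+2 - 2 * i.+1 = n - 2 * i)%N by lia.
congr (_ - _); last by rewrite mulrA.
have [hi|hi] := leqP (2 * i.+1) n.+1; last by rewrite vcoef_gt // !mul0r mulr0.
by rewrite mulrCA -exprS; congr (_ * x ^+ _); lia.
Qed.

End Coefficients.

Unset Implicit Arguments. Set Strict Implicit.

Theorem mainTheorem12 (F : fieldType) (x s q : F) (m n : nat)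
  (hq_int : forall k : nat, (0 < k)%N -> qint q k != 0)
  (hq_pow : forall j : nat, 1 + q ^+ j != 0)
  (hn : (2 <= n)%N) :
  vpoly x m s q n =
    x * vpoly x m s q (n - 1)
    - s * qlambda (n - 2) m q * q ^+ (n - 1)
        / ((1 + q ^+ (n + m - 2)) * (1 + q ^+ (n + m - 1)))
        * vpoly x m s q (n - 2).
Proof.
case: n hn => [|[|p]] // _.
have -> : (p.+2 + m - 2 = m + p)%N by lia.
have -> : (p.+2 + m - 1 = (m + p).+1)%N by lia.
rewrite !subSS !subn0.
exact: vpoly_rec.
Qed.
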